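(* For all $t\ge0$ and $x,y\in\mathbb R^d$, $$H^\nu_t(x,y)\le2(1+|y|)\hbar^\nu_t(x),$$ where $H^\nu_t(x,y):=\int_{B_\ell^c}\log\big(1+\frac{|z|}{1+|x-y|}\big)\nu_{t,x}(dz)$ and $\hbar^\nu_t(x):=\int_{B_\ell^c}\log\big(1+\frac{|z|}{1+|x|}\big)\nu_{t,x}(dz)$.
   Context: $d\ge1$, $\ell\in(0,1/\sqrt2)$, $B_\ell^c=\{z\in\mathbb R^d:|z|\ge\ell\}$, and $\{\nu_{t,x}\}_{t\ge0,x\in\mathbb R^d}$ is a family of (nonnegative) Lévy measures on $\mathbb R^d$. *)

From HB Require Import structures.
From mathcomp Require Import all_boot all_order all_algebra.
From mathcomp Require Import all_classical all_reals all_analysis.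
Set Implicit Arguments. Unset Strict Implicit. Unset Printing Implicit Defensive.
Import Order.TTheory GRing.Theory Num.Theory.
Local Open Scope classical_set_scope.
Local Open Scope ring_scope.

(* R^d is modelled as d.-tuple R, equipped by MathComp-Analysis with the
   product (= Borel) sigma-algebra generated by the coordinate maps. *)

Definition enorm (R : realType) (d : nat) (z : d.-tuple R) : R :=
  Num.sqrt (\sum_(i < d) (tnth z i) ^+ 2).

Definition vsub (R : realType) (d : nat) (x y : d.-tuple R) : d.-tuple R :=
  [tuple tnth x i - tnth y i | i < d].

Definition vzero (R : realType) (d : nat) : d.-tuple R := [tuple 0 | i < d].

Definition ball_compl (R : realType) (d : nat) (l : R) : set (d.-tuple R) :=
  [set z | l <= enorm z].

Definition is_levy_measure (R : realType) (d : nat)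
    (nu : {measure set (d.-tuple R) -> \bar R}) : Prop :=
  nu [set vzero R d] = 0%E /\
  (\int[nu]_(z in [set: d.-tuple R]) (Num.min 1 (enorm z ^+ 2))%:E < +oo)%E.

Definition Hnu (R : realType) (d : nat) (l : R)
    (nu : R -> d.-tuple R -> {measure set (d.-tuple R) -> \bar R})
    (t : R) (x y : d.-tuple R) : \bar R :=
  \int[nu t x]_(z in ball_compl l)
     (ln (1 + enorm z / (1 + enorm (vsub x y))))%:E.

Definition hbarnu (R : realType) (d : nat) (l : R)
    (nu : R -> d.-tuple R -> {measure set (d.-tuple R) -> \bar R})
    (t : R) (x : d.-tuple R) : \bar R :=
  \int[nu t x]_(z in ball_compl l)
     (ln (1 + enorm z / (1 + enorm x)))%:E.

From HB Require Import structures.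
From mathcomp Require Import all_boot all_order all_algebra.
From mathcomp Require Import all_classical all_reals all_analysis.
From mathcomp Require Import ring lra.
Import Order.TTheory GRing.Theory Num.Theory.
Local Open Scope classical_set_scope.
Local Open Scope ring_scope.

(** Pointwise in [z], the crude triangle inequality [|x| <= 2 (|x - y| + |y|)]
    gives [1 + |x| <= C (1 + |x - y|)] with [C = 2 (1 + |y|) >= 1], and
    [ln (1 + C b) <= C ln (1 + b)] for [b >= 0] and [C >= 1]; integrating
    yields the claim. The integrand need not be measurable, because the
    integral of a nonnegative function is the supremum of the integrals of the
    simple functions below it, and that supremum respects scaling. Nothing
    about [nu], [l], [d] or [t] is used: the bound holds for any measures. *)

Section ln_bounds.
Context {R : realType}.
Implicit Types b C : R.

Lemma div1D_le_ln1D b : 0 <= b -> b / (1 + b) <= ln (1 + b).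
Proof.
move=> b0.
have lt_m1 : -1 < - (b / (1 + b)).
  by rewrite ltrN2 ltr_pdivrMr ?mul1r; lra.
have := le_ln1Dx lt_m1.
have -> : 1 - b / (1 + b) = (1 + b)^-1 by field; lra.
rewrite lnV ?posrE; lra.
Qed.

Lemma ln1DM_le b C : 0 <= b -> 1 <= C -> ln (1 + C * b) <= C * ln (1 + b).
Proof.
move=> b0 C1.
set u := (C - 1) * (b / (1 + b)).
have u0 : 0 <= u by rewrite mulr_ge0 ?divr_ge0; lra.
have -> : 1 + C * b = (1 + b) * (1 + u) by rewrite /u; field; lra.
rewrite lnM ?posrE; try lra.
have ln_u : ln (1 + u) <= u by apply: le_ln1Dx; lra.
have : u <= (C - 1) * ln (1 + b).
  by rewrite ler_wpM2l ?div1D_le_ln1D; lra.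
lra.
Qed.

Lemma ln1D_div_le (a p q C : R) : 0 <= a -> 0 < p -> 0 < q -> 1 <= C ->
  q <= C * p -> ln (1 + a / p) <= C * ln (1 + a / q).
Proof.
move=> a0 p0 q0 C1 qCp.
have aq0 : 0 <= a / q by rewrite divr_ge0 // ltW.
apply: le_trans (ln1DM_le _ _ aq0 C1).
have ap_le : a / p <= C * (a / q).
  rewrite ler_pdivrMr // mulrAC mulrC mulrAC ler_pdivlMr //.
  by rewrite ler_wpM2l.
have ap0 : 0 <= a / p by rewrite divr_ge0 // ltW.
rewrite ler_ln ?posrE; lra.
Qed.

End ln_bounds.

Section euclidean_norm.
Context {R : realType} {d : nat}.
Implicit Types x y z : d.-tuple R.

Lemma enorm_ge0 z : 0 <= enorm z.
Proof. exact: sqrtr_ge0. Qed.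

Lemma sqr_enorm z : enorm z ^+ 2 = \sum_(i < d) tnth z i ^+ 2.
Proof. by rewrite sqr_sqrtr // sumr_ge0 // => i _; rewrite sqr_ge0. Qed.

Lemma enorm_le_vsub x y : enorm x <= 2 * (enorm (vsub x y) + enorm y).
Proof.
have sqr_le : enorm x ^+ 2 <= 2 * enorm (vsub x y) ^+ 2 + 2 * enorm y ^+ 2.
  rewrite !sqr_enorm !mulr_sumr -big_split /=.
  apply: ler_sum => i _; rewrite tnth_mktuple.
  by have := sqr_ge0 (tnth x i - 2 * tnth y i); nra.
have := enorm_ge0 x; have := enorm_ge0 y; have := enorm_ge0 (vsub x y).
by nra.
Qed.

Lemma enorm1D_le_vsub x y :
  1 + enorm x <= 2 * (1 + enorm y) * (1 + enorm (vsub x y)).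
Proof.
have := enorm_le_vsub x y; have := enorm_ge0 y; have := enorm_ge0 (vsub x y).
by nra.
Qed.

End euclidean_norm.

Section integral_le_scale.
Local Open Scope ereal_scope.
Context d (T : measurableType d) (R : realType).
Variables (mu : {measure set T -> \bar R}) (D : set T).
Import HBNNSimple.

Lemma ge0_le_integral_scale (f g : T -> \bar R) (c : R) : (0 < c)%R ->
  (forall x, D x -> 0 <= f x) -> (forall x, D x -> f x <= c%:E * g x) ->
  \int[mu]_(x in D) f x <= c%:E * \int[mu]_(x in D) g x.
Proof.
move=> c0 f0 fg.
have g0 x : D x -> 0 <= g x.
  move=> Dx; have := le_trans (f0 x Dx) (fg x Dx).
  by rewrite pmule_rge0.
rewrite (ge0_integralE _ f0) (ge0_integralE _ g0) /=.
apply: ge_ereal_sup => _ [h /= hf <-].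
have ci0 : (0 <= c^-1)%R by rewrite invr_ge0 ltW.
have -> : sintegral mu h = c%:E * sintegral mu (scale_nnsfun h ci0).
  by rewrite sintegralrM muleA -EFinM divff ?gt_eqF // mul1e.
rewrite lee_pmul2l //; apply: ereal_sup_ubound.
exists (scale_nnsfun h ci0) => //= x.
have := hf x; rewrite /patch; case: ifPn => [/set_mem Dx hx|_ hx] /=.
- have := le_trans hx (fg x Dx); have := g0 x Dx.
  case: (g x) => [r| |] //= r0; last by rewrite leey.
  by rewrite -EFinM !lee_fin ler_pdivrMl // mulrC.
- by rewrite lee_fin mulr_ge0_le0.
Qed.

End integral_le_scale.

Theorem lemma3p5 (R : realType) (d : nat) (l : R)
    (nu : R -> d.-tuple R -> {measure set (d.-tuple R) -> \bar R}) :
  (1 <= d)%N ->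
  0 < l -> l < 1 / Num.sqrt 2 ->
  (forall t x, is_levy_measure (nu t x)) ->
  forall (t : R) (x y : d.-tuple R), 0 <= t ->
  (Hnu l nu t x y <= (2 * (1 + enorm y))%:E * hbarnu l nu t x)%E.
Proof.
move=> _ _ _ _ t x y _.
have nx := enorm_ge0 x; have ny := enorm_ge0 y; have nxy := enorm_ge0 (vsub x y).
apply: ge0_le_integral_scale => [|z _|z _]; first lra.
- by rewrite lee_fin ln_ge0 // lerDl divr_ge0 ?enorm_ge0; lra.
- rewrite -EFinM lee_fin; apply: ln1D_div_le; rewrite ?enorm_ge0; try lra.
  exact: enorm1D_le_vsub.
Qed.
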